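(* For every integer $n\ge1$, the complete graph $K_{2n}$ is map-rich.
   Context: A map is a triple $M=(C_M,v_M,f_M)$ where $C_M$ is a finite cubic graph (multiple edges allowed) and $v_M,f_M$ are disjoint perfect matchings whose union is a disjoint union of 4-cycles, the squares ($SQ(M)$). $a_M=E(C_M)\setminus(v_M\cup f_M)$; $z_M$ is the matching of square diagonals; $Q_M=C_M\cup z_M$. For a map $X$, $G_X$ has vertices the cycles of $v_X\cup a_X$ and edges the squares, each square joining the cycles containing its two $v_X$-edges. The dual is $D=(C_M,f_M,v_M)$, the phial $P=(Q_M\setminus v_M,z_M,f_M)$; edge sets of $G_M,G_D,G_P$ are identified with $SQ(M)$, and $V,F,Z$ denote their $GF(2)$-coboundary spaces, $V^\perp$ the cycle space of $G_M$. $M$ is rich if $V^\perp=F+Z$. A graph $G$ is map-rich if $G\cong G_M$ for some rich map $M$. *)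

From mathcomp Require Import all_boot.
Set Implicit Arguments. Unset Strict Implicit. Unset Printing Implicit Defensive.

(* A map M = (C_M, v_M, f_M) is encoded by its vertex set T and the three
   perfect matchings v_M, f_M, a_M of the cubic multigraph C_M, each given as
   a fixed-point-free involution of T (the partner of a vertex along its
   v-, f-, resp. a-edge).  Since a cubic graph whose edges contain two disjoint
   perfect matchings has no loops, the remaining edges a_M form a third
   perfect matching, and C_M is recovered as the edge-disjoint union
   v_M + f_M + a_M (parallel edges allowed). *)

Section Maps.
Variable T : finType.

Definition fpf_involution (g : T -> T) := (forall x, g (g x) = x) /\ (forall x, g x != x).

(* v_M, f_M disjoint perfect matchings whose union is a disjoint union of 4-cycles *)
Definition is_map (v f a : T -> T) :=
  [/\ fpf_involution v, fpf_involution f, fpf_involution a &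
      forall x, v x != f x /\ v (f x) = f (v x)].

Definition rel2 (g h : T -> T) : rel T := fun x y => (y == g x) || (y == h x).

Definition sq (vX fX : T -> T) (x : T) : {set T} := [set y | connect (rel2 vX fX) x y].
(* the edge set SQ(X) of G_X *)
Definition SQ (vX fX : T -> T) : {set {set T}} := [set sq vX fX x | x in T].
(* the cycle of vX \cup aX containing x (a vertex of G_X) *)
Definition cyc (vX aX : T -> T) (x : T) : {set T} := [set y | connect (rel2 vX aX) x y].
Definition verts (vX aX : T -> T) : {set {set T}} := [set cyc vX aX x | x in T].
(* The square sq vX fX x has vX-edges {x, vX x} and {fX x, vX (fX x)}, hence
   joins the vertices cyc vX aX x and cyc vX aX (fX x) of G_X. *)

(* GF(2)-coboundary of a vertex set W of G_X: edges with exactly one end in W.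
   Edge sets are subsets of SQ(X); GF(2)-addition is symmetric difference. *)
Definition cobound (vX fX aX : T -> T) (W : {set {set T}}) : {set {set T}} :=
  [set sq vX fX x | x in T & (cyc vX aX x \in W) != (cyc vX aX (fX x) \in W)].

Definition cobspace (vX fX aX : T -> T) : {set {set {set T}}} :=
  [set cobound vX fX aX W | W : {set {set T}}].

Definition orth (E : {set {set T}}) (S : {set {set {set T}}}) : {set {set {set T}}} :=
  [set A : {set {set T}} | (A \subset E) && [forall B in S, ~~ odd #|A :&: B|]].

Definition symdiff (A B : {set {set T}}) : {set {set T}} := (A :\: B) :|: (B :\: A).

Definition addsp (S1 S2 : {set {set {set T}}}) : {set {set {set T}}} :=
  [set symdiff A B | A in S1, B in S2].

(* M rich: V^perp = F + Z, where V, F, Z are the coboundary spaces of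
   G_M (map (v,f), third matching a), G_D (D = (C_M, f, v), third matching a)
   and G_P (P = (Q_M \ v_M, z, f), third matching a, z = square diagonals).
   Note sq v f = sq f v = sq z f, so the three edge sets are literally SQ v f. *)
Definition zdiag (v f : T -> T) : T -> T := fun x => v (f x).

Definition rich (v f a : T -> T) :=
  orth (SQ v f) (cobspace v f a) =
  addsp (cobspace f v a) (cobspace (zdiag v f) f a).

(* G_M is isomorphic to the complete graph K_k (vertices 'I_k, edges the
   2-subsets of 'I_k, each edge incident to its two elements). *)
Definition iso_complete (v f a : T -> T) (k : nat) :=
  exists (phV : {set T} -> 'I_k) (phE : {set T} -> {set 'I_k}),
  [/\ {in verts v a &, injective phV},
      forall i : 'I_k, exists2 c, c \in verts v a & phV c = i,
      {in SQ v f &, injective phE},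
      forall S : {set 'I_k}, #|S| = 2 -> exists2 s, s \in SQ v f & phE s = S &
      forall x, #|phE (sq v f x)| = 2 /\
                phE (sq v f x) = [set phV (cyc v a x); phV (cyc v a (f x))]].

End Maps.

Definition complete_map_rich (k : nat) :=
  exists (m : nat) (v f a : 'I_m -> 'I_m),
    [/\ is_map v f a, rich v f a & iso_complete v f a k].

From mathcomp Require Import all_boot.
From mathcomp Require Import zify.
Set Implicit Arguments. Unset Strict Implicit. Unset Printing Implicit Defensive.

(* The inclusion F + Z <= V^perp holds for every map.  A square lies in a
   coboundary of G_D and in one of G_M exactly when one of its darts x has
   p x, q x, ~~ p (f x), ~~ q (v x), where p, q mark the two vertex sets; these
   darts are what remains of the a-stable set {p & q} after removing an
   f-stable and a v-stable part, so there are evenly many of them.  Replacing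
   f by the diagonal matching vf gives a map whose dual has the coboundaries of
   G_P, so Z <= V^perp is the same statement.

   For K_N, take a dart for each ordered pair (i, j) of distinct vertices and
   each side bit: v flips the side, a turns around i, and f reverses the dart,
   flipping the side iff i + j is even.  Then G_M is K_N.  An edge set A in
   V^perp has even degrees.  Its longest edge {i, h} lies on the 4-cycle
   i, h-1, i+1, h (or on the triangle i, i+1, i+2 if h = i + 2), whose other
   edges are shorter; with the chosen sides this cycle bounds an f- or
   vf-stable, a-stable set of darts, so it belongs to F or to Z.  Adding these
   cycles leaves only edges {k, k+1}, and an even-degree subgraph of a path is
   empty. *)

Section EdgeSpaces.
Variable T : finType.
Implicit Types (A B C E : {set {set T}}) (S : {set {set {set T}}}).

Lemma in_symdiff A B s : (s \in symdiff A B) = (s \in A) (+) (s \in B).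
Proof. by rewrite !inE; case: (s \in A); case: (s \in B). Qed.

Lemma symdiffA A B C : symdiff (symdiff A B) C = symdiff A (symdiff B C).
Proof. by apply/setP => s; rewrite !in_symdiff addbA. Qed.

Lemma symdiffC A B : symdiff A B = symdiff B A.
Proof. by apply/setP => s; rewrite !in_symdiff addbC. Qed.

Lemma symdiffK A B : symdiff (symdiff A B) B = A.
Proof. by apply/setP => s; rewrite !in_symdiff -addbA addbb addbF. Qed.

Lemma symdiffv A : symdiff A A = set0.
Proof. by apply/setP => s; rewrite in_symdiff addbb inE. Qed.

Lemma symdiff0 A : symdiff A set0 = A.
Proof. by apply/setP => s; rewrite in_symdiff inE addbF. Qed.

Lemma odd_card_symdiff A B : odd #|symdiff A B| = odd #|A| (+) odd #|B|.
Proof.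
have disj : (A :\: B) :&: (B :\: A) = set0.
  by apply/setP => s; rewrite !inE; case: (s \in A); case: (s \in B).
have := cardsUI (A :\: B) (B :\: A); rewrite disj cards0 addn0 /symdiff => ->.
rewrite -(cardsID B A) -(cardsID A B) setIC !oddD.
by case: (odd _); case: (odd _); case: (odd _).
Qed.

Lemma odd_card_symdiffI A B C :
  odd #|symdiff A B :&: C| = odd #|A :&: C| (+) odd #|B :&: C|.
Proof.
rewrite -odd_card_symdiff; have -> // : symdiff A B :&: C = symdiff (A :&: C) (B :&: C).
by apply/setP => s; rewrite !(inE, in_symdiff); case: (s \in A); case: (s \in B); case: (s \in C).
Qed.

Definition symdiff_closed S := forall A B, A \in S -> B \in S -> symdiff A B \in S.

Lemma orth_symdiff_closed E S : symdiff_closed (orth E S).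
Proof.
move=> A1 A2; rewrite !inE => /andP[sA1 /forall_inP oA1] /andP[sA2 /forall_inP oA2].
apply/andP; split.
  apply/subsetP => s; rewrite in_symdiff.
  by case: (boolP (s \in A1)) => /= [/(subsetP sA1) | _ /(subsetP sA2)].
by apply/forall_inP => B SB; rewrite odd_card_symdiffI (negbTE (oA1 B SB)) (negbTE (oA2 B SB)).
Qed.

Lemma addsp0 (S1 S2 : {set {set {set T}}}) : set0 \in S1 -> set0 \in S2 -> set0 \in addsp S1 S2.
Proof. by move=> S1_0 S2_0; apply/imset2P; exists set0 set0; rewrite ?symdiff0. Qed.

Lemma addsp_symdiffl (S1 S2 : {set {set {set T}}}) A C :
  symdiff_closed S1 -> A \in addsp S1 S2 -> C \in S1 -> symdiff A C \in addsp S1 S2.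
Proof.
move=> clS1 /imset2P[A1 A2 A1S A2S ->] CS.
rewrite symdiffA (symdiffC A2) -symdiffA.
by apply/imset2P; exists (symdiff A1 C) A2; rewrite ?clS1.
Qed.

Lemma addsp_symdiffr (S1 S2 : {set {set {set T}}}) A C :
  symdiff_closed S2 -> A \in addsp S1 S2 -> C \in S2 -> symdiff A C \in addsp S1 S2.
Proof.
move=> clS2 /imset2P[A1 A2 A1S A2S ->] CS.
by rewrite symdiffA; apply/imset2P; exists A1 (symdiff A2 C); rewrite ?clS2.
Qed.

Lemma addsp_sub_orth E S (S1 S2 : {set {set {set T}}}) :
  S1 \subset orth E S -> S2 \subset orth E S -> addsp S1 S2 \subset orth E S.
Proof.
move=> /subsetP sS1 /subsetP sS2; apply/subsetP => _ /imset2P[A1 A2 /sS1 A1o /sS2 A2o ->].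
exact: orth_symdiff_closed.
Qed.

End EdgeSpaces.

Section Squares.
Variable T : finType.
Implicit Types (g h : T -> T) (x y : T).

Lemma connect_rel2_inv (T' : eqType) (k : T -> T') g h :
  (forall x, k (g x) = k x) -> (forall x, k (h x) = k x) ->
  forall x y, connect (rel2 g h) x y -> k x = k y.
Proof.
move=> kg kh x _ /connectP[p + ->]; elim: p x => //= z p IH x.
by case/andP=> /orP[]/eqP-> /IH <-; rewrite ?kg ?kh.
Qed.

Lemma cyc_sq : @cyc T = @sq T. Proof. by []. Qed.

Lemma sqC g h : sq g h =1 sq h g.
Proof.
by move=> x; apply/setP => y; rewrite !inE; apply: eq_connect => u w; rewrite /rel2 orbC.
Qed.

Lemma eq_sq g h g' h' : g =1 g' -> h =1 h' -> sq g h =1 sq g' h'.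
Proof.
by move=> gg hh x; apply/setP => y; rewrite !inE; apply: eq_connect => u w; rewrite /rel2 gg hh.
Qed.

Lemma sq_zdiag g h : involutive g -> sq g (zdiag g h) =1 sq g h.
Proof.
move=> gK x; apply/setP => y; rewrite !inE.
apply/idP/idP; apply: connect_sub => u _ /orP[]/eqP->.
- by apply: connect1; rewrite /rel2 eqxx.
- apply: (@connect_trans _ _ (h u)); apply: connect1; first by rewrite /rel2 eqxx orbT.
  by rewrite /rel2 /zdiag eqxx.
- by apply: connect1; rewrite /rel2 eqxx.
- apply: (@connect_trans _ _ (zdiag g h u)); apply: connect1; first by rewrite /rel2 eqxx orbT.
  by rewrite /rel2 /zdiag gK eqxx.
Qed.

Lemma mem_sq_imset g h (P : pred T) y :
  (forall x, P (g x) = P x) -> (forall x, P (h x) = P x) ->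
  (sq g h y \in [set sq g h x | x in T & P x]) = P y.
Proof.
move=> Pg Ph; apply/imsetP/idP => [[x] | Py]; last by exists y; rewrite ?inE.
rewrite inE => Px sq_xy; have : y \in sq g h x by rewrite -sq_xy inE connect0.
by rewrite inE => /(connect_rel2_inv Pg Ph) <-.
Qed.

Lemma invol_closedE g (X : {set T}) :
  involutive g -> (forall x, x \in X -> g x \in X) -> forall x, (g x \in X) = (x \in X).
Proof. by move=> gK Xg x; apply/idP/idP => [/Xg | /Xg]; rewrite ?gK. Qed.

Lemma mem_sq_imset_closed g h (X : {set T}) y :
  involutive g -> involutive h ->
  (forall x, x \in X -> g x \in X) -> (forall x, x \in X -> h x \in X) ->
  (sq g h y \in [set sq g h x | x in X]) = (y \in X).
Proof.
move=> gK hK Xg Xh; apply/imsetP/idP => [[x xX sq_xy] | yX]; last by exists y.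
have : y \in sq g h x by rewrite -sq_xy inE connect0.
rewrite inE => /(connect_rel2_inv (k := fun u => u \in X)) <- //.
- exact: invol_closedE gK Xg.
- exact: invol_closedE hK Xh.
Qed.

Lemma sq_imset_sub g h (P : pred T) : [set sq g h x | x in T & P x] \subset SQ g h.
Proof. by apply/subsetP => _ /imsetP[x _ ->]; apply: imset_f. Qed.

Lemma even_card_fpf_closed g (X : {set T}) :
  fpf_involution g -> (forall x, x \in X -> g x \in X) -> ~~ odd #|X|.
Proof.
case=> gK g_neq Xg.
have X2 : X \subset order_set g 2.
  apply/subsetP => x _; rewrite inE (@order_cycle _ g [:: x; g x]) //=.
  - by rewrite gK !eqxx.
  - by rewrite inE eq_sym g_neq.
  - exact: mem_head.
have clX : fclosed g X by move=> x _ /eqP <-; rewrite (invol_closedE gK).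
by rewrite -(fcard_order_set (can_inj gK) X2 clX) oddM andbF.
Qed.

Section Involutions.
Variables g h : T -> T.
Hypotheses (gK : involutive g) (hK : involutive h).

Lemma connect_rel2_sym : connect_sym (rel2 g h).
Proof.
apply: sym_connect_sym => x y; rewrite /rel2.
by apply/idP/idP => /orP[]/eqP->; rewrite ?gK ?hK eqxx ?orbT.
Qed.

Lemma sq_connect x y : connect (rel2 g h) x y -> sq g h x = sq g h y.
Proof. by move=> xy; apply/setP => z; rewrite !inE (same_connect connect_rel2_sym xy). Qed.

Lemma sq_invl x : sq g h (g x) = sq g h x.
Proof. by apply/esym/sq_connect/connect1; rewrite /rel2 eqxx. Qed.

Lemma sq_invr x : sq g h (h x) = sq g h x.
Proof. by apply/esym/sq_connect/connect1; rewrite /rel2 eqxx orbT. Qed.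

Hypothesis ghC : forall x, g (h x) = h (g x).

Lemma sqE x : sq g h x = [set x; g x; h x; g (h x)].
Proof.
apply/setP => y; rewrite inE; apply/idP/idP.
  have cl4 : closed (rel2 g h) (mem [set x; g x; h x; g (h x)]).
    apply: intro_closed; first exact: connect_rel2_sym.
    move=> u w /orP[]/eqP-> ; rewrite !inE -!orbA => /or4P[]/eqP->;
      by rewrite ?gK ?hK -?ghC ?gK ?hK ?eqxx ?orbT.
  by move/(closed_connect cl4); rewrite !inE eqxx => <-.
have step u w : rel2 g h u w -> connect (rel2 g h) u w by move/connect1.
rewrite !inE -!orbA => /or4P[]/eqP->; first exact: connect0.
- by apply: step; rewrite /rel2 eqxx.
- by apply: step; rewrite /rel2 eqxx orbT.
- by apply: (@connect_trans _ _ (h x)); apply: step; rewrite /rel2 eqxx ?orbT.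
Qed.

End Involutions.

Lemma eq_sq_imset g h (P Q : pred T) :
  P =1 Q -> [set sq g h x | x in T & P x] = [set sq g h x | x in T & Q x].
Proof. by move=> PQ; rewrite (@eq_finset _ (fun x => P x) (fun x => Q x) PQ). Qed.

Lemma sq_imset_symdiff g h (P Q : pred T) :
  (forall x, P (g x) = P x) -> (forall x, P (h x) = P x) ->
  (forall x, Q (g x) = Q x) -> (forall x, Q (h x) = Q x) ->
  symdiff [set sq g h x | x in T & P x] [set sq g h x | x in T & Q x] =
  [set sq g h x | x in T & P x (+) Q x].
Proof.
move=> Pg Ph Qg Qh; apply/setP => s; rewrite in_symdiff.
have [/imsetP[y _ ->] | notSQ] := boolP (s \in SQ g h).
  by rewrite !mem_sq_imset // => x; rewrite ?Pg ?Ph ?Qg ?Qh.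
have out (R : pred T) : (s \in [set sq g h x | x in T & R x]) = false.
  by apply: contraNF notSQ; apply: (subsetP (sq_imset_sub g h R)).
by rewrite !out.
Qed.

Section Coboundaries.
Variables g h k : T -> T.
Hypotheses (gK : involutive g) (hK : involutive h) (kK : involutive k).
Hypothesis ghC : forall x, g (h x) = h (g x).

Let crosses (W : {set {set T}}) x := (cyc g k x \in W) != (cyc g k (h x) \in W).

Let crosses_g W x : crosses W (g x) = crosses W x.
Proof. by rewrite /crosses -ghC !cyc_sq !sq_invl. Qed.

Let crosses_h W x : crosses W (h x) = crosses W x.
Proof. by rewrite /crosses hK eq_sym. Qed.

Lemma cobound_symdiff W1 W2 :
  symdiff (cobound g h k W1) (cobound g h k W2) = cobound g h k (symdiff W1 W2).
Proof.
have cobE W : cobound g h k W = [set sq g h x | x in T & crosses W x] by [].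
rewrite !cobE sq_imset_symdiff; try exact: crosses_g; try exact: crosses_h.
apply: eq_sq_imset => x; rewrite /crosses !in_symdiff.
by case: (_ \in W1); case: (_ \in W1); case: (_ \in W2); case: (_ \in W2).
Qed.

Lemma cobspace_symdiff_closed : symdiff_closed (cobspace g h k).
Proof.
move=> _ _ /imsetP[W1 _ ->] /imsetP[W2 _ ->].
by rewrite cobound_symdiff; apply: imset_f.
Qed.

End Coboundaries.

Lemma cobound0 g h k : cobound g h k set0 = set0.
Proof. by apply/setP => s; rewrite inE; apply/imsetP => [][x]; rewrite !inE. Qed.

Lemma set0_cobspace g h k : set0 \in cobspace g h k.
Proof. by rewrite -(cobound0 g h k); apply: imset_f. Qed.

End Squares.

Section Map.
Variable T : finType.
Variables v f a : T -> T.
Hypothesis vfa : is_map v f a.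

Let v_fpf : fpf_involution v. Proof. by case: vfa. Qed.
Let f_fpf : fpf_involution f. Proof. by case: vfa. Qed.
Let a_fpf : fpf_involution a. Proof. by case: vfa. Qed.
Let vK : involutive v. Proof. by case: v_fpf. Qed.
Let fK : involutive f. Proof. by case: f_fpf. Qed.
Let aK : involutive a. Proof. by case: a_fpf. Qed.
Let vfC x : v (f x) = f (v x). Proof. by case: vfa => _ _ _ /(_ x)[]. Qed.
Let v_neq_f x : v x != f x. Proof. by case: vfa => _ _ _ /(_ x)[]. Qed.
Let f_neq x : f x != x. Proof. by case: f_fpf. Qed.
Let zK : involutive (zdiag v f). Proof. by move=> x; rewrite /zdiag vfC vK fK. Qed.

(* Each square in both coboundaries contains exactly one of these darts. *)
Lemma card_cobound_cap (p q : pred T) :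
  (forall x, p (v x) = p x) -> (forall x, q (f x) = q x) ->
  #|[set sq v f x | x in T & p x != p (f x)] :&: [set sq v f x | x in T & q x != q (v x)]|
  = #|[set x | [&& p x, ~~ p (f x), q x & ~~ q (v x)]]|.
Proof.
move=> pv qf.
have pfv x : p (f (v x)) = p (f x) by rewrite -vfC pv.
have qvf x : q (v (f x)) = q (v x) by rewrite vfC qf.
have cVv x : (p (v x) != p (f (v x))) = (p x != p (f x)) by rewrite pv pfv.
have cVf x : (p (f x) != p (f (f x))) = (p x != p (f x)) by rewrite fK eq_sym.
have cQv x : (q (v x) != q (v (v x))) = (q x != q (v x)) by rewrite vK eq_sym.
have cQf x : (q (f x) != q (v (f x))) = (q x != q (v x)) by rewrite qf qvf.
rewrite -(@card_in_imset _ _ (sq v f)); last first.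
  move=> x y; rewrite !inE => /and4P[px pfx qx qvx] /and4P[py pfy qy qvy] sq_xy.
  have : y \in sq v f x by rewrite sq_xy (sqE vK fK vfC) !inE eqxx.
  rewrite (sqE vK fK vfC) !inE -!orbA => /or4P[]/eqP y_eq //; move: py pfy qy qvy.
  - by rewrite y_eq vK (negbTE qvx).
  - by rewrite y_eq (negbTE pfx).
  - by rewrite y_eq pv (negbTE pfx).
apply: eq_card => s; rewrite inE; apply/andP/imsetP => [[]|[x]].
  case/imsetP => x; rewrite inE => px_pfx ->; rewrite (mem_sq_imset _ cQv cQf) => qx_qvx.
  have pfx : p (f x) = ~~ p x by move: px_pfx; case: (p x); case: (p (f x)).
  have qvx : q (v x) = ~~ q x by move: qx_qvx; case: (q x); case: (q (v x)).
  case px: (p x); case qx: (q x).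
  - by exists x; rewrite // !inE pfx qvx px qx.
  - by exists (v x); [rewrite !inE pv pfv pfx qvx vK px qx | rewrite (sq_invl vK fK)].
  - by exists (f x); [rewrite !inE pfx fK qf qvf qvx px qx | rewrite (sq_invr vK fK)].
  - exists (v (f x)); last by rewrite (sq_invl vK fK) (sq_invr vK fK).
    by rewrite !inE pv pfv fK qvf vK qf pfx qvx px qx.
rewrite inE => /and4P[px pfx qx qvx] ->.
by rewrite (mem_sq_imset _ cVv cVf) (mem_sq_imset _ cQv cQf) px qx (negbTE pfx) (negbTE qvx).
Qed.

(* {p & q} is a-stable; its parts with p (f x), resp. with ~~ p (f x) and
   q (v x), are f-stable, resp. v-stable, and the rest is the set below. *)
Lemma even_card_cap_darts (p q : pred T) :
  (forall x, p (v x) = p x) -> (forall x, p (a x) = p x) ->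
  (forall x, q (f x) = q x) -> (forall x, q (a x) = q x) ->
  ~~ odd #|[set x | [&& p x, ~~ p (f x), q x & ~~ q (v x)]]|.
Proof.
move=> pv pa qf qa.
set U := [set x | p x && q x]; set Pf := [set x | p (f x)]; set Qv := [set x | q (v x)].
have evenU : ~~ odd #|U|.
  by apply: (even_card_fpf_closed a_fpf) => x; rewrite !inE pa qa.
have evenUf : ~~ odd #|U :&: Pf|.
  apply: (even_card_fpf_closed f_fpf) => x; rewrite !inE fK qf => /andP[/andP[px qx] pfx].
  by rewrite px qx pfx.
have evenUv : ~~ odd #|(U :\: Pf) :&: Qv|.
  apply: (even_card_fpf_closed v_fpf) => x; rewrite !inE vK pv -vfC pv.
  by case/andP=> /and3P[-> -> ->] ->.
have -> : [set x | [&& p x, ~~ p (f x), q x & ~~ q (v x)]] = (U :\: Pf) :\: Qv.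
  by apply/setP => x; rewrite !inE; case: (p x); case: (q x); case: (p (f x)); case: (q (v x)).
move: evenU; rewrite -(cardsID Pf U) -(cardsID Qv (U :\: Pf)) !oddD.
by rewrite (negbTE evenUf) (negbTE evenUv).
Qed.

Lemma coboundF W : cobound f v a W =
  [set sq v f x | x in T & (cyc f a x \in W) != (cyc f a (v x) \in W)].
Proof. by apply: eq_imset => x; rewrite sqC. Qed.

Lemma dual_cobound_orth W1 W2 : ~~ odd #|cobound f v a W1 :&: cobound v f a W2|.
Proof.
rewrite coboundF setIC card_cobound_cap => [|x|x]; rewrite !cyc_sq.
- by apply: even_card_cap_darts => x;
    rewrite ?(sq_invl vK aK) ?(sq_invr vK aK) ?(sq_invl fK aK) ?(sq_invr fK aK).
- by rewrite (sq_invl vK aK).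
- by rewrite (sq_invl fK aK).
Qed.

(* (v, vf, a) has the squares and the vertex cycles of M, and its dual has the
   coboundaries of G_P. *)
Lemma is_map_zdiag : is_map v (zdiag v f) a.
Proof.
split=> // [|x].
  split=> // x.
  by apply: contraNneq (v_neq_f x) => /(congr1 v); rewrite /zdiag vK => <-.
split; last by rewrite /zdiag vK vfC vK.
by apply: contraNneq (f_neq x) => /(congr1 v); rewrite /zdiag !vK => <-.
Qed.

Lemma sq_zdiag_f : sq (zdiag v f) f =1 sq v f.
Proof.
have zC : zdiag v f =1 zdiag f v := vfC.
by move=> x; rewrite sqC (eq_sq (frefl f) zC) (sq_zdiag _ fK) sqC.
Qed.

Lemma coboundZ W : cobound (zdiag v f) f a W =
  [set sq v f x | x in T & (cyc (zdiag v f) a x \in W) != (cyc (zdiag v f) a (f x) \in W)].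
Proof. exact: eq_imset sq_zdiag_f. Qed.

Lemma cobound_v_zdiag W : cobound v (zdiag v f) a W = cobound v f a W.
Proof.
rewrite /cobound (eq_imset _ (sq_zdiag _ vK)); apply: eq_sq_imset => x.
by rewrite /zdiag cyc_sq (sq_invl vK aK).
Qed.

Lemma cobound_zdiag_fv W : cobound (zdiag v f) f a W = cobound (zdiag v f) v a W.
Proof.
have szv : sq (zdiag v f) v =1 sq v f by move=> x; rewrite sqC (sq_zdiag _ vK).
rewrite coboundZ /cobound (eq_imset _ szv).
apply: eq_sq_imset => x; rewrite !cyc_sq -[f x]vK vfC.
by rewrite -/(zdiag v f (v x)) (sq_invl zK aK).
Qed.

Lemma face_cobspaceF (X : {set T}) :
  (forall x, x \in X -> f x \in X) -> (forall x, x \in X -> a x \in X) ->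
  [set sq v f y | y in T & (y \in X) != (v y \in X)] \in cobspace f v a.
Proof.
move=> Xf Xa; apply/imsetP; exists [set cyc f a x | x in X] => //.
by rewrite coboundF; apply: eq_sq_imset => y; rewrite !cyc_sq !mem_sq_imset_closed.
Qed.

Lemma face_cobspaceZ (X : {set T}) :
  (forall x, x \in X -> zdiag v f x \in X) -> (forall x, x \in X -> a x \in X) ->
  [set sq v f y | y in T & (y \in X) != (v y \in X)] \in cobspace (zdiag v f) f a.
Proof.
move=> Xz Xa; apply/imsetP; exists [set cyc (zdiag v f) a x | x in X] => //.
rewrite coboundZ; apply: eq_sq_imset => y; rewrite !cyc_sq !mem_sq_imset_closed //.
by rewrite -[f y]vK vfC -/(zdiag v f (v y)) (invol_closedE zK Xz).
Qed.

Lemma cobspaceF_symdiff_closed : symdiff_closed (cobspace f v a).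
Proof. by apply: cobspace_symdiff_closed => // x; rewrite vfC. Qed.

Lemma cobspaceZ_symdiff_closed : symdiff_closed (cobspace (zdiag v f) f a).
Proof.
by apply: cobspace_symdiff_closed => // x; rewrite /zdiag fK vfC fK.
Qed.

End Map.

Lemma phial_cobound_orth (T : finType) (v f a : T -> T) W1 W2 : is_map v f a ->
  ~~ odd #|cobound (zdiag v f) f a W1 :&: cobound v f a W2|.
Proof.
move=> vfa; rewrite (cobound_zdiag_fv vfa) -(cobound_v_zdiag vfa).
exact: dual_cobound_orth (is_map_zdiag vfa) W1 W2.
Qed.

Lemma cobspace_add_sub_orth (T : finType) (v f a : T -> T) : is_map v f a ->
  addsp (cobspace f v a) (cobspace (zdiag v f) f a) \subset orth (SQ v f) (cobspace v f a).
Proof.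
move=> vfa; apply: addsp_sub_orth; apply/subsetP => _ /imsetP[W1 _ ->];
  rewrite inE; apply/andP; split.
- by rewrite coboundF; apply: sq_imset_sub.
- by apply/forall_inP => _ /imsetP[W2 _ ->]; apply: dual_cobound_orth.
- by rewrite (coboundZ vfa); apply: sq_imset_sub.
- by apply/forall_inP => _ /imsetP[W2 _ ->]; apply: phial_cobound_orth.
Qed.

(* A dart x of K_N is given by its vertex [vtx x], the neighbour [nbr x] it
   points to and a side bit.  On side [true], [a] moves to the next neighbour,
   skipping [vtx x]. *)
Section Coordinates.
Variable T : finType.
Variable K : nat.
Local Notation N := K.+1.
Variables (v f a : T -> T) (vtx nbr : T -> nat) (side : T -> bool).
Hypotheses (vtx_v : forall x, vtx (v x) = vtx x) (nbr_v : forall x, nbr (v x) = nbr x)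
  (side_v : forall x, side (v x) = ~~ side x).
Hypotheses (vtx_f : forall x, vtx (f x) = nbr x) (nbr_f : forall x, nbr (f x) = vtx x)
  (side_f : forall x, side (f x) = side x (+) ~~ odd (vtx x + nbr x)).
Hypotheses (vtx_a : forall x, vtx (a x) = vtx x) (aK : involutive a)
  (side_a : forall x, side (a x) = ~~ side x).
Hypothesis nbr_a_succ : forall x,
  side x -> (nbr x).+1 < N -> (nbr x).+1 != vtx x -> nbr (a x) = (nbr x).+1.
Hypothesis nbr_a_skip : forall x,
  side x -> (nbr x).+1 = vtx x -> (vtx x).+1 < N -> nbr (a x) = (vtx x).+1.
Hypothesis coord_inj :
  forall x y, vtx x = vtx y -> nbr x = nbr y -> side x = side y -> x = y.
Hypothesis vtx_lt : forall x, vtx x < N.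
Hypothesis vtx_neq_nbr : forall x, vtx x != nbr x.
Hypothesis coord_surj : forall i j s, i < N -> j < N -> i != j ->
  exists x, [/\ vtx x = i, nbr x = j & side x = s].
Hypothesis vtx_connect : forall x y, vtx x = vtx y -> connect (rel2 v a) x y.

Let nbr_lt x : nbr x < N. Proof. by rewrite -vtx_f. Qed.
Let vK : involutive v.
Proof. by move=> x; apply: coord_inj; rewrite ?vtx_v ?nbr_v ?side_v ?negbK. Qed.
Let fK : involutive f.
Proof.
by move=> x; apply: coord_inj; rewrite ?side_f ?vtx_f ?nbr_f // addnC -addbA addbb addbF.
Qed.
Let vfC x : v (f x) = f (v x).
Proof.
by apply: coord_inj; rewrite ?vtx_v ?nbr_v ?vtx_f ?nbr_f // side_v !side_f side_v vtx_v nbr_v addNb.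
Qed.

Lemma coord_is_map : is_map v f a.
Proof.
have neq_side (g : T -> T) x : side (g x) = ~~ side x -> g x != x.
  by move=> sg; apply: contra_eqN sg => /eqP->; case: (side x).
split.
- by split=> // x; apply: neq_side (side_v x).
- by split=> // x; apply: contra_neq (vtx_neq_nbr x) => fx; rewrite -vtx_f fx.
- by split=> // x; apply: neq_side (side_a x).
- move=> x; split; last exact: vfC.
  by apply: contra_neq (vtx_neq_nbr x) => vfx; rewrite -vtx_f -vfx vtx_v.
Qed.

Definition lo x := minn (vtx x) (nbr x).
Definition hi x := maxn (vtx x) (nbr x).

Lemma sq_coord x : sq v f x = [set y | (lo y == lo x) && (hi y == hi x)].
Proof.
apply/setP => y; rewrite (sqE vK fK vfC) !inE -!orbA /lo /hi; apply/idP/idP.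
  case/or4P => /eqP->; rewrite ?vtx_v ?nbr_v ?vtx_f ?nbr_f ?eqxx //.
    by rewrite minnC maxnC !eqxx.
  by rewrite minnC maxnC !eqxx.
case/andP => /eqP lo_eq /eqP hi_eq.
have side_eq (z : T) : side y = side z \/ side y = side (v z).
  by rewrite side_v; case: (side y); case: (side z); auto.
have [[vy ny] | [vy ny]] : vtx y = vtx x /\ nbr y = nbr x \/ vtx y = nbr x /\ nbr y = vtx x.
  by move: lo_eq hi_eq (vtx_neq_nbr x) (vtx_neq_nbr y); lia.
- by case: (side_eq x) => sy; apply/or4P; [constructor 1 | constructor 2];
    apply/eqP/coord_inj; rewrite ?vtx_v ?nbr_v.
- by case: (side_eq (f x)) => sy; apply/or4P; [constructor 3 | constructor 4];
    apply/eqP/coord_inj; rewrite ?vtx_v ?nbr_v ?vtx_f ?nbr_f.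
Qed.

Lemma cyc_coord x : cyc v a x = [set y | vtx y == vtx x].
Proof.
apply/setP => y; rewrite !inE; apply/idP/eqP => [| /esym]; last exact: vtx_connect.
by move/(connect_rel2_inv vtx_v vtx_a) ->.
Qed.

Lemma nbr_a_side_false x w :
  ~~ side x -> side w -> vtx w = vtx x -> nbr (a w) = nbr x -> nbr (a x) = nbr w.
Proof.
move=> sx sw vw naw; suff -> : x = a w by rewrite aK.
by apply: coord_inj; rewrite ?vtx_a ?side_a ?sw ?(negbTE sx).
Qed.

Lemma nbr_a_pred x : ~~ side x -> 0 < nbr x -> (nbr x).-1 != vtx x -> nbr (a x) = (nbr x).-1.
Proof.
move=> sx nx_gt0 ne; have := nbr_lt x; have := vtx_lt x => ? ?.
have [w [vw nw sw]] : exists w, [/\ vtx w = vtx x, nbr w = (nbr x).-1 & side w]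
  by apply: coord_surj; lia.
rewrite -nw; apply: nbr_a_side_false; rewrite ?sw //.
by rewrite nbr_a_succ //; rewrite ?nw ?vw; move: (vtx_neq_nbr x); lia.
Qed.

Lemma nbr_a_pred_skip x :
  ~~ side x -> nbr x = (vtx x).+1 -> 0 < vtx x -> nbr (a x) = (vtx x).-1.
Proof.
move=> sx nx vx_gt0; have := nbr_lt x; have := vtx_lt x => ? ?.
have [w [vw nw sw]] : exists w, [/\ vtx w = vtx x, nbr w = (vtx x).-1 & side w]
  by apply: coord_surj; lia.
rewrite -nw; apply: nbr_a_side_false; rewrite ?sw //.
by rewrite nbr_a_skip //; rewrite ?nw ?vw; move: (vtx_neq_nbr x); lia.
Qed.

Definition star k := [set sq v f y | y in T & (vtx y == k) || (nbr y == k)].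

Lemma mem_star k x : (sq v f x \in star k) = (vtx x == k) || (nbr x == k).
Proof. by rewrite mem_sq_imset // => y; rewrite ?vtx_v ?nbr_v // vtx_f nbr_f orbC. Qed.

Lemma star_cobspace k : star k \in cobspace v f a.
Proof.
apply/imsetP; exists [set cyc v a x | x in T & vtx x == k] => //.
apply: eq_sq_imset => y; rewrite !cyc_sq !mem_sq_imset; try by move=> x; rewrite ?vtx_v ?vtx_a.
by move: (vtx_neq_nbr y); rewrite vtx_f; lia.
Qed.

Definition edge_len (s : {set T}) := if [pick y in s] is Some y then hi y - lo y else 0.

Lemma edge_len_sq x : edge_len (sq v f x) = hi x - lo x.
Proof.
rewrite /edge_len; case: pickP => [y | /(_ x)]; last by rewrite inE connect0.
by rewrite sq_coord inE => /andP[/eqP-> /eqP->].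
Qed.

Lemma eq_sq_coord x y : lo x = lo y -> hi x = hi y -> sq v f x = sq v f y.
Proof. by move=> lo_xy hi_xy; rewrite !sq_coord lo_xy hi_xy. Qed.

Definition face_cobound (C : {set {set T}}) :=
  C \in cobspace f v a \/ C \in cobspace (zdiag v f) f a.

(* The darts of a closed walk, one per arc (p, q), on side [sd p q].  The
   hypotheses make this set stable under f (or vf) and a, so its boundary, the
   walk itself, is a coboundary of G_D (or G_P). *)
Lemma arc_face (arc sd : nat -> nat -> bool) :
  (forall p q, arc p q = arc q p) ->
  (forall p q, arc p q -> sd q p = sd p q (+) ~~ odd (p + q)) \/
  (forall p q, arc p q -> sd q p = ~~ (sd p q (+) ~~ odd (p + q))) ->
  (forall p q, arc p q -> sd p q ->
    [&& q.+1 < N, q.+1 != p, arc p q.+1 & ~~ sd p q.+1] ||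
    [&& q.+1 == p, p.+1 < N, arc p p.+1 & ~~ sd p p.+1]) ->
  (forall p q, arc p q -> ~~ sd p q ->
    [&& 0 < q, q.-1 != p, arc p q.-1 & sd p q.-1] ||
    [&& q == p.+1, 0 < p, arc p p.-1 & sd p p.-1]) ->
  face_cobound [set sq v f x | x in T & arc (vtx x) (nbr x)].
Proof.
move=> arcC arc_f arc_succ arc_pred.
pose X := [set x | arc (vtx x) (nbr x) && (side x == sd (vtx x) (nbr x))].
have -> : [set sq v f x | x in T & arc (vtx x) (nbr x)] =
          [set sq v f x | x in T & (x \in X) != (v x \in X)].
  apply: eq_sq_imset => x; rewrite !inE vtx_v nbr_v side_v.
  by case: (arc _ _); case: (side x); case: (sd _ _).
have Xa x : x \in X -> a x \in X.
  rewrite !inE vtx_a side_a => /andP[arc_x /eqP sx]; case sd_x: (side x); rewrite sd_x in sx.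
    case/orP: (arc_succ _ _ arc_x (esym sx)) => /and4P[lt ne arc' sd'].
      by rewrite nbr_a_succ ?sd_x // arc' (negbTE sd').
    by rewrite nbr_a_skip ?sd_x ?(eqP lt) // arc' (negbTE sd').
  case/orP: (arc_pred _ _ arc_x (negbT (esym sx))) => /and4P[lt ne arc' sd'].
    by rewrite nbr_a_pred ?sd_x // arc' sd'.
  by rewrite nbr_a_pred_skip ?sd_x ?(eqP lt) // arc' sd'.
case: arc_f => [sd_f | sd_z];
  [left; apply: (face_cobspaceF coord_is_map) | right; apply: (face_cobspaceZ coord_is_map)];
  rewrite // => x; rewrite !inE.
- rewrite vtx_f nbr_f side_f => /andP[arc_x /eqP->].
  by rewrite arcC arc_x (sd_f _ _ arc_x) eqxx.
- rewrite /zdiag vtx_v nbr_v side_v vtx_f nbr_f side_f => /andP[arc_x /eqP->].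
  by rewrite arcC arc_x (sd_z _ _ arc_x) eqxx.
Qed.

Definition longest_in (C : {set {set T}}) y :=
  [/\ sq v f y \in C, forall s, s \in C -> edge_len s <= edge_len (sq v f y)
    & forall s, s \in C -> edge_len s = edge_len (sq v f y) -> s = sq v f y].

Lemma arc_longest (arc : nat -> nat -> bool) y :
  (forall p q, arc p q = arc q p) -> arc (vtx y) (nbr y) ->
  (forall p q, arc p q -> p != q ->
    maxn p q - minn p q < hi y - lo y \/ minn p q = lo y /\ maxn p q = hi y) ->
  longest_in [set sq v f x | x in T & arc (vtx x) (nbr x)] y.
Proof.
move=> arcC arc_y; rewrite /lo /hi => arc_len.
have mem_arc x : (sq v f x \in [set sq v f x | x in T & arc (vtx x) (nbr x)]) = arc (vtx x) (nbr x).
  by rewrite mem_sq_imset // => z; rewrite ?vtx_v ?nbr_v // vtx_f nbr_f arcC.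
split; first by rewrite mem_arc.
  move=> s /imsetP[x]; rewrite inE => /arc_len/(_ (vtx_neq_nbr x)) len_x ->.
  by rewrite !edge_len_sq /lo /hi; lia.
move=> s /imsetP[x]; rewrite inE => /arc_len/(_ (vtx_neq_nbr x)) len_x ->.
rewrite !edge_len_sq /lo /hi => len_eq; apply: eq_sq_coord; rewrite /lo /hi; lia.
Qed.

Definition quad_arc i j p q :=
  ((p == i) || (p == i.+1)) && ((q == j) || (q == j.+1)) ||
  ((p == j) || (p == j.+1)) && ((q == i) || (q == i.+1)).

Definition tri_arc i p q :=
  [&& [|| p == i, p == i.+1 | p == i.+2], [|| q == i, q == i.+1 | q == i.+2] & p != q].

Lemma long_edge_face y : 1 < hi y - lo y -> exists2 C, face_cobound C & longest_in C y.
Proof.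
move=> len_y; have := vtx_lt y; have := nbr_lt y; have := vtx_neq_nbr y.
rewrite /lo /hi in len_y * => ? ? ?.
have [long | short] := ltnP 2 (maxn (vtx y) (nbr y) - minn (vtx y) (nbr y)).
  pose i := minn (vtx y) (nbr y); pose j := (maxn (vtx y) (nbr y)).-1.
  have quadC p q : quad_arc i j p q = quad_arc i j q p.
    by rewrite /quad_arc orbC; congr orb; apply: andbC.
  exists [set sq v f x | x in T & quad_arc i j (vtx x) (nbr x)].
    apply: (@arc_face _ (fun p q => (q == i) || (q == j))) => //;
      try by move=> p q; rewrite /quad_arc => /orP[]/andP[/orP[]/eqP-> /orP[]/eqP->] /=; lia.
    by have [odd_ij | even_ij] := boolP (odd (i + j)); [left | right];
      move=> p q /orP[]/andP[/orP[]/eqP-> /orP[]/eqP->] /=; lia.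
  apply: (@arc_longest (quad_arc i j)) => //; first by rewrite /quad_arc /i /j; lia.
  by move=> p q /orP[]/andP[/orP[]/eqP-> /orP[]/eqP->]; rewrite /lo /hi /i /j; lia.
pose i := minn (vtx y) (nbr y).
have triC p q : tri_arc i p q = tri_arc i q p by rewrite /tri_arc andbCA (eq_sym p q).
exists [set sq v f x | x in T & tri_arc i (vtx x) (nbr x)].
  apply: (@arc_face _ (fun p q => (q == i) || (p == i) && (q == i.+1))) => //;
    try by move=> p q; rewrite /tri_arc => /and3P[/or3P[]/eqP-> /or3P[]/eqP-> ne] /=; lia.
  by left => p q /and3P[/or3P[]/eqP-> /or3P[]/eqP-> ne] /=; lia.
apply: (@arc_longest (tri_arc i)) => //; first by rewrite /tri_arc /i; lia.
by move=> p q /and3P[/or3P[]/eqP-> /or3P[]/eqP-> ne]; rewrite /lo /hi /i; lia.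
Qed.

Local Notation OR := (orth (SQ v f) (cobspace v f a)).
Local Notation FZ := (addsp (cobspace f v a) (cobspace (zdiag v f) f a)).

Lemma orth_sq A s : A \in OR -> s \in A -> exists y, s = sq v f y.
Proof. by rewrite inE => /andP[/subsetP A_SQ _] /A_SQ /imsetP[y _ ->]; exists y. Qed.

Lemma even_orth_star A k : A \in OR -> ~~ odd #|A :&: star k|.
Proof. by rewrite inE => /andP[_ /forall_inP]; apply; apply: star_cobspace. Qed.

Lemma face_symdiff A C : face_cobound C -> symdiff A C \in FZ -> A \in FZ.
Proof.
move=> [C_F | C_Z] AC_FZ; rewrite -(symdiffK A C).
  exact: addsp_symdiffl (cobspaceF_symdiff_closed coord_is_map) AC_FZ C_F.
exact: addsp_symdiffr (cobspaceZ_symdiff_closed coord_is_map) AC_FZ C_Z.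
Qed.

(* Along the path 0, 1, 2, ...: once no edge below [lo y] is in A, the star of
   [lo y] meets A in [sq y] alone, which is odd. *)
Lemma orth_short_eq0 (A : {set {set T}}) :
  A \in OR -> (forall s, s \in A -> edge_len s <= 1) -> A = set0.
Proof.
move=> A_orth A_short.
have edge_len1 s : s \in A -> exists2 x, s = sq v f x & hi x = (lo x).+1.
  move=> sA; have [x s_x] := orth_sq A_orth sA; exists x => //.
  by move: (A_short s sA) (vtx_neq_nbr x); rewrite s_x edge_len_sq /lo /hi; lia.
have lowest y : hi y = (lo y).+1 ->
    (forall x, hi x = lo y -> hi x = (lo x).+1 -> sq v f x \notin A) -> sq v f y \notin A.
  move=> hi_y below; apply/negP => yA; have := even_orth_star (lo y) A_orth.
  suff -> : A :&: star (lo y) = [set sq v f y] by rewrite cards1.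
  apply/setP => s; rewrite !inE; apply/andP/eqP => [[sA] | ->]; last first.
    by rewrite yA mem_star /lo; lia.
  have [x s_x hi_x] := edge_len1 s sA; rewrite s_x mem_star => x_at.
  have [lo_xy | lo_xy] := eqVneq (lo x) (lo y); first by apply: eq_sq_coord; lia.
  have hi_xy : hi x = lo y by move: hi_x x_at lo_xy; rewrite /lo /hi; lia.
  by move: (below x hi_xy hi_x); rewrite -s_x sA.
have notin k y : lo y = k -> hi y = (lo y).+1 -> sq v f y \notin A.
  elim: k y => [|k IHk] y lo_y hi_y; apply: lowest => // x hi_x_y hi_x; first by lia.
  by apply: IHk; lia.
apply/setP => s; rewrite inE; apply/negbTE/negP => sA.
have [x s_x hi_x] := edge_len1 s sA.
by move: sA; rewrite s_x (negbTE (notin _ x erefl hi_x)).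
Qed.

Lemma face_orth C : face_cobound C -> C \in OR.
Proof.
move=> C_face; apply: (subsetP (cobspace_add_sub_orth coord_is_map)).
by apply: (face_symdiff C_face); rewrite symdiffv addsp0 ?set0_cobspace.
Qed.

Lemma drop_longest (A C : {set {set T}}) y :
  longest_in C y -> sq v f y \in A ->
  (forall s, s \in A -> edge_len s <= edge_len (sq v f y)) ->
  (forall s, s \in symdiff A C -> edge_len s <= edge_len (sq v f y)) /\
  [set s in symdiff A C | edge_len s == edge_len (sq v f y)] =
    [set s in A | edge_len s == edge_len (sq v f y)] :\ sq v f y.
Proof.
move=> [yC C_le C_eq] yA A_le; split.
  by move=> s; rewrite in_symdiff; case sA: (s \in A) => /= sC; [apply: A_le | apply: C_le].
apply/setP => s; rewrite [LHS]inE in_symdiff !inE.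
have [-> | ne] := eqVneq s (sq v f y); first by rewrite yA yC.
have [sC | _] := boolP (s \in C); last by rewrite addbF.
have [/(C_eq s sC) s_y | len_ne] := eqVneq (edge_len s) (edge_len (sq v f y)).
  by rewrite s_y eqxx in ne.
by rewrite !andbF.
Qed.

(* Lexicographic induction on the largest edge length and on the number of
   edges of that length. *)
Lemma orth_sub_addsp D (A : {set {set T}}) :
  A \in OR -> (forall s, s \in A -> edge_len s <= D) -> A \in FZ.
Proof.
have short_FZ B : B \in OR -> (forall s, s \in B -> edge_len s <= 1) -> B \in FZ.
  by move=> B_orth B_len; rewrite (orth_short_eq0 B_orth B_len) addsp0 ?set0_cobspace.
elim: D A => [|D IHD] A A_orth A_len.
  by apply: short_FZ => // s /A_len; lia.
have [D0 | D_gt0] := posnP D; first by apply: short_FZ => // s; rewrite -D0; apply: A_len.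
have [n] := ubnP #|[set s in A | edge_len s == D.+1]|.
elim: n A A_orth A_len => // n IHn A A_orth A_len n_long.
have [long0 | [s0]] := set_0Vmem [set s in A | edge_len s == D.+1].
  apply: IHD => // s sA; move: (A_len s sA); rewrite leq_eqVlt ltnS => /orP[/eqP len_s | //].
  suff : s \in set0 by rewrite inE.
  by rewrite -long0 inE sA len_s eqxx.
rewrite inE => /andP[s0A /eqP len_s0].
have [y s0_y] := orth_sq A_orth s0A; rewrite s0_y in s0A len_s0.
have [C C_face C_long] : exists2 C, face_cobound C & longest_in C y.
  by apply: long_edge_face; rewrite -edge_len_sq len_s0; lia.
have A_le s : s \in A -> edge_len s <= edge_len (sq v f y) by rewrite len_s0; apply: A_len.
have [AC_len AC_long] := drop_longest C_long s0A A_le.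
apply: (face_symdiff C_face); apply: IHn.
- exact: orth_symdiff_closed A_orth (face_orth C_face).
- by move=> s /AC_len; rewrite len_s0.
- rewrite len_s0 in AC_long; rewrite AC_long.
  by move: n_long; rewrite (cardsD1 (sq v f y)) inE s0A len_s0 eqxx.
Qed.

Lemma coord_rich : rich v f a.
Proof.
apply/eqP; rewrite eqEsubset (cobspace_add_sub_orth coord_is_map) andbT.
apply/subsetP => A A_orth; apply: (@orth_sub_addsp N) => // s sA.
have [x ->] := orth_sq A_orth sA; rewrite edge_len_sq /lo /hi.
by move: (vtx_lt x) (nbr_lt x); lia.
Qed.

Definition vertex_label (c : {set T}) : 'I_N :=
  inord (if [pick y in c] is Some y then vtx y else 0).

Definition edge_label (s : {set T}) : {set 'I_N} :=
  if [pick y in s] is Some y then [set inord (vtx y); inord (nbr y)] else set0.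

Lemma vertex_label_cyc x : vertex_label (cyc v a x) = inord (vtx x).
Proof.
rewrite /vertex_label; case: pickP => [y | /(_ x)]; last by rewrite inE connect0.
by rewrite cyc_coord inE => /eqP->.
Qed.

Lemma edge_label_sq x : edge_label (sq v f x) = [set inord (vtx x); inord (nbr x)].
Proof.
rewrite /edge_label; case: pickP => [y | /(_ x)]; last by rewrite inE connect0.
rewrite sq_coord inE /lo /hi => lohi_y.
have [[-> ->] | [-> ->]] : vtx y = vtx x /\ nbr y = nbr x \/ vtx y = nbr x /\ nbr y = vtx x.
- by move: lohi_y (vtx_neq_nbr x) (vtx_neq_nbr y); lia.
- by [].
- by rewrite setUC.
Qed.

Lemma inord_eq m n : m < N -> n < N -> (inord m == inord n :> 'I_N) = (m == n).
Proof. by move=> lt_m lt_n; rewrite -val_eqE /= !inordK. Qed.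

Lemma coord_iso_complete : 0 < K -> iso_complete v f a N.
Proof.
move=> K_gt0; exists vertex_label, edge_label; split.
- move=> _ _ /imsetP[x1 _ ->] /imsetP[x2 _ ->]; rewrite !vertex_label_cyc => /eqP.
  by rewrite inord_eq // !cyc_coord => /eqP->.
- move=> i.
  have [x [x_i _ _]] : exists x, [/\ vtx x = i, nbr x = (if i == 0 :> nat then 1 else 0) & side x].
    by apply: coord_surj; case: (i : nat) (ltn_ord i) => [|[]].
  by exists (cyc v a x); rewrite ?imset_f // vertex_label_cyc x_i inord_val.
- move=> _ _ /imsetP[x1 _ ->] /imsetP[x2 _ ->]; rewrite !edge_label_sq => lab_eq.
  have ends u w : [set inord (vtx u); inord (nbr u)] = [set inord (vtx w); inord (nbr w) : 'I_N] ->
      ((vtx u == vtx w) || (vtx u == nbr w)) && ((nbr u == vtx w) || (nbr u == nbr w)).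
    by move=> uw; rewrite -!inord_eq // -!in_set2 -uw !inE !eqxx orbT.
  move: (ends _ _ lab_eq) (ends _ _ (esym lab_eq)) (vtx_neq_nbr x1) (vtx_neq_nbr x2) => *.
  by apply: eq_sq_coord; rewrite /lo /hi; lia.
- move=> S /eqP/cards2P[i [j [ij ->]]].
  have [x [x_i x_j _]] := coord_surj true (ltn_ord i) (ltn_ord j) ij.
  by exists (sq v f x); rewrite ?imset_f // edge_label_sq x_i x_j !inord_val.
- move=> x; rewrite edge_label_sq !vertex_label_cyc vtx_f cards2 inord_eq //.
  by rewrite vtx_neq_nbr.
Qed.

End Coordinates.

Section CompleteGraph.
Variable p : nat.

Definition dart := ('I_p.+2 * 'I_p.+1 * bool)%type.

(* The dart (i, k, s) points from i to i + k + 1 (mod p + 2), so that [a]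
   steps k cyclically. *)
Definition dart_nbr (x : dart) : nat :=
  let j := x.1.1 + x.1.2 + 1 in if j < p.+2 then j else j - p.+2.

Definition dart_v (x : dart) : dart := (x.1.1, x.1.2, ~~ x.2).

Definition dart_f (x : dart) : dart :=
  (inord (dart_nbr x), inord (p - x.1.2), x.2 (+) ~~ odd (x.1.1 + dart_nbr x)).

Definition dart_a (x : dart) : dart :=
  if x.2 then (x.1.1, inord (if x.1.2 < p then x.1.2 + 1 else 0), false)
  else (x.1.1, inord (if 0 < x.1.2 then x.1.2 - 1 else p), true).

Lemma dart_eq (x y : dart) :
  val x.1.1 = val y.1.1 -> val x.1.2 = val y.1.2 -> x.2 = y.2 -> x = y.
Proof. by case: x => [[i k] s]; case: y => [[i' k'] s'] /= /val_inj -> /val_inj -> ->. Qed.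

Lemma dart_nbr_lt x : dart_nbr x < p.+2.
Proof.
case: x => [[i k] s]; rewrite /dart_nbr /=; have := ltn_ord i; have := ltn_ord k.
by case: ifP; lia.
Qed.

Lemma dart_vtx_neq_nbr x : val x.1.1 != dart_nbr x.
Proof.
case: x => [[i k] s]; rewrite /dart_nbr /=; have := ltn_ord i; have := ltn_ord k.
by case: ifP; lia.
Qed.

Local Notation T := 'I_#|{: dart}|.

Definition vT (x : T) : T := enum_rank (dart_v (enum_val x)).
Definition fT (x : T) : T := enum_rank (dart_f (enum_val x)).
Definition aT (x : T) : T := enum_rank (dart_a (enum_val x)).
Definition vtxT (x : T) : nat := (enum_val x).1.1.
Definition nbrT (x : T) : nat := dart_nbr (enum_val x).
Definition sideT (x : T) : bool := (enum_val x).2.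

Lemma vtxT_v x : vtxT (vT x) = vtxT x. Proof. by rewrite /vtxT /vT enum_rankK. Qed.
Lemma nbrT_v x : nbrT (vT x) = nbrT x. Proof. by rewrite /nbrT /vT enum_rankK. Qed.
Lemma sideT_v x : sideT (vT x) = ~~ sideT x. Proof. by rewrite /sideT /vT enum_rankK. Qed.

Lemma vtxT_f x : vtxT (fT x) = nbrT x.
Proof. by rewrite /vtxT /fT enum_rankK /= inordK // dart_nbr_lt. Qed.

Lemma nbrT_f x : nbrT (fT x) = vtxT x.
Proof.
rewrite /nbrT /vtxT /fT enum_rankK; case: (enum_val x) => [[i k] s].
rewrite {1}/dart_nbr /= inordK ?dart_nbr_lt // inordK; last by have := ltn_ord k; lia.
by rewrite /dart_nbr /=; have := ltn_ord i; have := ltn_ord k; do 2 case: ifP; lia.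
Qed.

Lemma sideT_f x : sideT (fT x) = sideT x (+) ~~ odd (vtxT x + nbrT x).
Proof. by rewrite /sideT /fT enum_rankK. Qed.

Lemma vtxT_a x : vtxT (aT x) = vtxT x.
Proof. by rewrite /vtxT /aT enum_rankK /dart_a; case: (enum_val x).2. Qed.

Lemma sideT_a x : sideT (aT x) = ~~ sideT x.
Proof. by rewrite /sideT /aT enum_rankK /dart_a; case: (enum_val x).2. Qed.

Lemma aTK : involutive aT.
Proof.
move=> x; rewrite /aT enum_rankK -[RHS](enum_valK x); congr enum_rank.
case: (enum_val x) => [[i k] s]; apply: dart_eq; rewrite /dart_a; case: s => //=;
  rewrite !inordK; have := ltn_ord k; do ?case: ifP; lia.
Qed.

Lemma nbrT_a_succ x :
  sideT x -> (nbrT x).+1 < p.+2 -> (nbrT x).+1 != vtxT x -> nbrT (aT x) = (nbrT x).+1.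
Proof.
rewrite /sideT /nbrT /vtxT /aT enum_rankK; case: (enum_val x) => [[i k] s] /= ->.
rewrite /dart_a /dart_nbr /= inordK; last by have := ltn_ord k; case: ifP; lia.
by have := ltn_ord i; have := ltn_ord k; do 3 case: ifP; lia.
Qed.

Lemma nbrT_a_skip x :
  sideT x -> (nbrT x).+1 = vtxT x -> (vtxT x).+1 < p.+2 -> nbrT (aT x) = (vtxT x).+1.
Proof.
rewrite /sideT /nbrT /vtxT /aT enum_rankK; case: (enum_val x) => [[i k] s] /= ->.
rewrite /dart_a /dart_nbr /= inordK; last by have := ltn_ord k; case: ifP; lia.
by have := ltn_ord i; have := ltn_ord k; do 3 case: ifP; lia.
Qed.

Lemma coordT_inj x y : vtxT x = vtxT y -> nbrT x = nbrT y -> sideT x = sideT y -> x = y.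
Proof.
rewrite /vtxT /nbrT /sideT -[x]enum_valK -[y]enum_valK !enum_rankK => vxy nxy sxy.
congr enum_rank; move: vxy nxy sxy; case: (enum_val x) => [[i k] s].
case: (enum_val y) => [[i' k'] s'] /= vxy nxy sxy; apply: dart_eq => //=.
move: nxy; rewrite /dart_nbr /= vxy; have := ltn_ord i'; have := ltn_ord k; have := ltn_ord k'.
by do 2 case: ifP; lia.
Qed.

Lemma coordT_surj i j s : i < p.+2 -> j < p.+2 -> i != j ->
  exists x, [/\ vtxT x = i, nbrT x = j & sideT x = s].
Proof.
move=> lt_i lt_j ne_ij.
pose k := if i < j then j - i - 1 else j + p.+2 - i - 1.
have lt_k : k < p.+1 by rewrite /k; case: ifP; lia.
exists (enum_rank ((inord i, inord k, s) : dart)).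
rewrite /vtxT /nbrT /sideT enum_rankK /= inordK //; split => //.
by rewrite /dart_nbr /= !inordK // /k; move: lt_k; do 2 case: ifP; lia.
Qed.

Lemma vtxT_connect x y : vtxT x = vtxT y -> connect (rel2 vT aT) x y.
Proof.
have vTK : involutive vT by move=> z; apply: coordT_inj; rewrite ?vtxT_v ?nbrT_v ?sideT_v ?negbK.
have from_base (i : 'I_p.+2) k s : k < p.+1 ->
    connect (rel2 vT aT) (enum_rank ((i, ord0, false) : dart)) (enum_rank ((i, inord k, s) : dart)).
  elim: k s => [|k IHk] s lt_k.
    rewrite (_ : inord 0 = ord0); last by apply: val_inj; rewrite /= inordK.
    case: s; last exact: connect0.
    by apply: connect1; rewrite /rel2 /vT enum_rankK /dart_v eqxx.
  have to_false : connect (rel2 vT aT) (enum_rank ((i, ord0, false) : dart))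
                                       (enum_rank ((i, inord k.+1, false) : dart)).
    apply: connect_trans (IHk true (ltnW lt_k)) _; apply: connect1.
    rewrite /rel2 /aT enum_rankK /dart_a /= inordK; last by lia.
    by rewrite (_ : (if k < p then k + 1 else 0) = k.+1) ?eqxx ?orbT //; case: ifP; lia.
  case: s => //; apply: connect_trans to_false _; apply: connect1.
  by rewrite /rel2 /vT enum_rankK /dart_v eqxx.
have to_base z : connect (rel2 vT aT) (enum_rank ((inord (vtxT z), ord0, false) : dart)) z.
  rewrite -{2}(enum_valK z) /vtxT; case: (enum_val z) => [[i k] s] /=.
  by have := from_base i k s (ltn_ord k); rewrite !inord_val.
move=> vxy; apply: connect_trans (to_base y); rewrite -vxy.
by rewrite (connect_rel2_sym vTK aTK); apply: to_base.
Qed.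

Lemma vtxT_lt x : vtxT x < p.+2. Proof. exact: ltn_ord. Qed.

Lemma vtxT_neq_nbrT x : vtxT x != nbrT x. Proof. exact: dart_vtx_neq_nbr. Qed.

Lemma complete_graph_map_rich : complete_map_rich p.+2.
Proof.
exists #|{: dart}|, vT, fT, aT; split.
- exact: (coord_is_map vtxT_v nbrT_v sideT_v vtxT_f nbrT_f sideT_f aTK sideT_a coordT_inj
           vtxT_neq_nbrT).
- exact: (coord_rich vtxT_v nbrT_v sideT_v vtxT_f nbrT_f sideT_f vtxT_a aTK sideT_a
           nbrT_a_succ nbrT_a_skip coordT_inj vtxT_lt vtxT_neq_nbrT coordT_surj).
- exact: (coord_iso_complete vtxT_v nbrT_v sideT_v vtxT_f nbrT_f sideT_f vtxT_a coordT_inj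
           vtxT_lt vtxT_neq_nbrT coordT_surj vtxT_connect).
Qed.

End CompleteGraph.

Theorem theorem2p11 : forall n : nat, 1 <= n -> complete_map_rich (2 * n).
Proof.
move=> n n_gt0; have -> : 2 * n = (2 * n - 2).+2 by lia.
exact: complete_graph_map_rich.
Qed.
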